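(* Let $G=(V,E)$ be a directed graph, $s\neq t$ vertices, $k\ge 1$ an integer and $v\in V$. Then $e(s,v)\in E$ and $EV^*_{k-1}(v,t)$ exists if and only if $e(s,v)$ is an edge of $SPG_k(s,t)$.
   Context: A path from $x$ to $y$ in $G$ is a vertex sequence $x=v_0,\dots,v_m=y$ with $(v_{i-1},v_i)\in E$; its length is $m$ and $V(p)$, $E(p)$ are its vertex and edge sets. A simple path has no repeated vertex. $SPG_k(s,t)$ is the subgraph of $G$ formed by the union of vertex sets and edge sets of all simple paths from $s$ to $t$ of length at most $k$. $EV^*_l(v,t)$ exists iff there is at least one simple path from $v$ to $t$ of length at most $l$ not containing $s$, and then it is the intersection of $V(p)$ over all such paths. *)

From mathcomp Require Import all_boot.
Set Implicit Arguments. Unset Strict Implicit. Unset Printing Implicit Defensive.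

Section Paths.
Variables (V : finType) (E : rel V).

(* A path from x to y is the vertex sequence x :: p = [v_0; ...; v_m] with
   v_0 = x, v_m = last x p = y and (v_{i-1}, v_i) \in E; its length is
   m = size p. *)
Definition is_path (x y : V) (p : seq V) : bool :=
  path E x p && (last x p == y).

Definition path_vertices (x : V) (p : seq V) : seq V := x :: p.

Definition path_edges (x : V) (p : seq V) : seq (V * V) := zip (x :: p) p.

Definition is_simple_path (x y : V) (p : seq V) : bool :=
  is_path x y p && uniq (path_vertices x p).

Definition in_SPG_edge (k : nat) (s t : V) (a b : V) : Prop :=
  exists p : seq V,
    [/\ is_simple_path s t p, size p <= k & (a, b) \in path_edges s p].

Definition EVstar_exists (s : V) (l : nat) (v t : V) : Prop :=
  exists p : seq V,
    [/\ is_simple_path v t p, size p <= l & s \notin path_vertices v p].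

End Paths.

From mathcomp Require Import all_boot.
Set Implicit Arguments. Unset Strict Implicit. Unset Printing Implicit Defensive.

(* An SPG_k edge leaving s must be the first edge of its simple s-t path,
   since s occurs only at the start; the rest of that path is a simple v-t
   path avoiding s, of length at most k-1. Conversely, prepending the edge
   (s, v) to such a path yields a simple s-t path of length at most k. *)

Lemma mem_zip_fst (T1 T2 : eqType) (a : T1) (b : T2) (x : seq T1) (y : seq T2) :
  (a, b) \in zip x y -> a \in x.
Proof.
elim: x y => [|c x IHx] [|d y] //=; rewrite !in_cons.
by case/orP=> [/eqP[-> _]|/IHx ->]; rewrite ?eqxx ?orbT.
Qed.

Section SimplePaths.
Variables (V : finType) (E : rel V).

Lemma simple_path_cons (x y w : V) (p : seq V) :
  is_simple_path E x y (w :: p) =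
  [&& E x w, is_simple_path E w y p & x \notin w :: p].
Proof.
rewrite /is_simple_path /is_path /path_vertices /= -!andbA.
by case: (x \notin w :: p); rewrite ?andbT ?andbF.
Qed.

Lemma simple_path_edge_from_source (x y b : V) (p : seq V) :
  is_simple_path E x y p -> (x, b) \in path_edges x p -> p = b :: behead p.
Proof.
case: p => [|w p] //; rewrite simple_path_cons /path_edges [zip _ _]/=.
case/and3P=> _ _ x_notin; rewrite in_cons; case/orP=> [/eqP[->] //|x_edge].
by move: x_notin; rewrite (mem_zip_fst x_edge).
Qed.

End SimplePaths.

Theorem lemma4p4 (V : finType) (E : rel V) (s t v : V) (k : nat) :
  s != t -> 1 <= k ->
  (E s v /\ EVstar_exists E s k.-1 v t) <-> in_SPG_edge E k s t s v.
Proof.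
move=> _ k_gt0; split.
- case=> Esv [p [simple_p size_p s_notin]].
  exists (v :: p); split.
  + by rewrite simple_path_cons Esv simple_p.
  + by rewrite /= -(prednK k_gt0) ltnS.
  + by rewrite /path_edges mem_head.
- case=> p [simple_p size_p sv_edge].
  have p_eq := simple_path_edge_from_source simple_p sv_edge.
  move: simple_p size_p; rewrite p_eq simple_path_cons => /and3P[Esv simple_q s_notin].
  split=> //; exists (behead p); split=> //.
  by rewrite -ltnS prednK.
Qed.
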